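(* Let $k$ be a positive integer, let $d\ge0$ and let $p\in\mathbb{C}[x_1,x_2]$ be homogeneous of degree $d$. Let $0\le i_1,\dots,i_k,j_1,\dots,j_k\le d$ be integers with $\sum_\ell i_\ell=\sum_\ell j_\ell$. Then, in $\mathbb{C}[x_1,x_2,y_1,y_2]$, $$\Delta^{j_1}(p)\cdots\Delta^{j_k}(p)\in\Big\langle\,\Delta^{i_1}(p)\cdots\Delta^{i_k}(p),\ B^{k-1}\cdot(x_1y_2-x_2y_1)\,\Big\rangle,$$ where $B=\{p,\Delta(p),\dots,\Delta^{d}(p),\,x_1y_2-x_2y_1\}$, $B^{k-1}\cdot(x_1y_2-x_2y_1)$ denotes the set of all products of $k-1$ elements of $B$ multiplied by $x_1y_2-x_2y_1$, and $\langle\cdot\rangle$ denotes the generated ideal.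
   Context: $\Delta$ is the polarization operator $\Delta=y_1\,\partial_{x_1}+y_2\,\partial_{x_2}$ acting on $\mathbb{C}[x_1,x_2,y_1,y_2]$, and $\Delta^i$ its $i$-th iterate. *)

From HB Require Import structures.
From mathcomp Require Import all_boot all_order all_algebra all_field.
Set Implicit Arguments. Unset Strict Implicit. Unset Printing Implicit Defensive.
Import GRing.Theory Num.Theory.
Local Open Scope ring_scope.

(* The polynomial ring R[x1,x2,y1,y2], represented as iterated univariate
   polynomials  R[x1][x2][y1][y2]  (innermost variable x1, outermost y2). *)
Definition P4 (R : comNzRingType) := {poly {poly {poly {poly R}}}}.

Definition X1 (R : comNzRingType) : P4 R := ('X : {poly R})%:P%:P%:P.
Definition X2 (R : comNzRingType) : P4 R := ('X : {poly {poly R}})%:P%:P.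
Definition Y1 (R : comNzRingType) : P4 R := ('X : {poly {poly {poly R}}})%:P.
Definition Y2 (R : comNzRingType) : P4 R := 'X.

Definition Dx1 (R : comNzRingType) (f : P4 R) : P4 R :=
  map_poly (map_poly (map_poly (@deriv R))) f.
Definition Dx2 (R : comNzRingType) (f : P4 R) : P4 R :=
  map_poly (map_poly (@deriv {poly R})) f.

Definition polar (R : comNzRingType) (f : P4 R) : P4 R :=
  Y1 R * Dx1 f + Y2 R * Dx2 f.
Definition polarn (R : comNzRingType) (i : nat) (f : P4 R) : P4 R :=
  iter i (@polar R) f.

(* R[x1,x2] = R[x1][x2] (outer variable x2), embedded as constants in y1,y2. *)
Definition embed2 (R : comNzRingType) (p : {poly {poly R}}) : P4 R := p%:P%:P.

(* p is homogeneous of degree d: every monomial x1^a x2^b occurring in p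
   has a + b = d (the coefficient of x1^a x2^b is (p`_b)`_a). *)
Definition homogeneous (R : comNzRingType) (p : {poly {poly R}}) (d : nat) : Prop :=
  forall a b : nat, (p`_b)`_a != 0 -> (a + b)%N = d.

Definition wdet (R : comNzRingType) : P4 R := X1 R * Y2 R - X2 R * Y1 R.

Definition in_ideal (R : comNzRingType) (G : P4 R -> Prop) (f : P4 R) : Prop :=
  exists s : seq (P4 R * P4 R),
    (forall q, q \in s -> G q.2) /\ f = \sum_(q <- s) q.1 * q.2.

Definition Bset (R : comNzRingType) (P : P4 R) (d : nat) (b : P4 R) : Prop :=
  (exists i : nat, (i <= d)%N /\ b = polarn i P) \/ b = wdet R.

Definition Bpow_w (R : comNzRingType) (P : P4 R) (d m : nat) (h : P4 R) : Prop :=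
  exists bs : seq (P4 R), size bs = m /\ (forall b, b \in bs -> Bset P d b) /\
    h = (\prod_(b <- bs) b) * wdet R.

From HB Require Import structures.
From mathcomp Require Import all_boot all_order all_algebra all_field.
From mathcomp Require Import ring zify.
Set Implicit Arguments. Unset Strict Implicit. Unset Printing Implicit Defensive.
Import GRing.Theory Num.Theory.
Local Open Scope ring_scope.

(* Write P_a = Delta^a p, w = x1 y2 - x2 y1, E = x1 d/dx1 + x2 d/dx2 (Euler
   operator) and J(f, g) = df/dx1 dg/dx2 - df/dx2 dg/dx1.  The proof rests on
   the identity E f . Delta g - E g . Delta f = w . J(f, g).  Since
   E P_a = (d - a) P_a, it gives
       (d - a) P_a P_(c+1) - (d - c) P_c P_(a+1) = w . J(P_a, P_c),
   and J(P_a, P_c) is itself a multiple of w for a, c < d: for c = a it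
   vanishes, for c = a + 1 the same identity applied to dP_a/dx1, dP_a/dx2
   gives it, and Delta J(P_a, P_c) = J(P_(a+1), P_c) + J(P_a, P_(c+1)) with
   Delta w = 0 propagates it to all gaps.  Hence moving one unit of exponent
   between two factors of a product P_(v_1) ... P_(v_k) changes it by a
   nonzero scalar modulo w^2 times the other k-2 factors, an element of
   B^(k-1) w.  Such moves connect any admissible exponent vector with the
   same total to i, which proves the theorem. *)

Definition derivation (R : comNzRingType) (D : R -> R) : Prop :=
  (forall a b, D (a + b) = D a + D b) /\ (forall a b, D (a * b) = D a * b + a * D b).

Section DerivationFacts.
Variables (R : comNzRingType) (D : R -> R).
Hypothesis derD : derivation D.

Lemma derivation0 : D 0 = 0.
Proof. by apply: (addrI (D 0)); rewrite -derD.1 !addr0. Qed.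

Lemma derivationN a : D (- a) = - D a.
Proof. by apply: (addrI (D a)); rewrite -derD.1 !subrr derivation0. Qed.

Lemma derivationB a b : D (a - b) = D a - D b.
Proof. by rewrite derD.1 derivationN. Qed.

Lemma derivationMn a n : D (a *+ n) = D a *+ n.
Proof.
by elim: n => [|n IH]; rewrite ?mulr0n ?derivation0 // !mulrS derD.1 IH.
Qed.
End DerivationFacts.

Section Polarization.
Variables (R : comNzRingType) (D1 D2 : R -> R) (x1 x2 y1 y2 : R).
Hypotheses (derD1 : derivation D1) (derD2 : derivation D2)
  (D12 : forall a, D1 (D2 a) = D2 (D1 a))
  (D1x1 : D1 x1 = 1) (D1x2 : D1 x2 = 0) (D1y1 : D1 y1 = 0) (D1y2 : D1 y2 = 0)
  (D2x1 : D2 x1 = 0) (D2x2 : D2 x2 = 1) (D2y1 : D2 y1 = 0) (D2y2 : D2 y2 = 0).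

Definition polar_op f := y1 * D1 f + y2 * D2 f.
Definition euler f := x1 * D1 f + x2 * D2 f.
Definition wr := x1 * y2 - x2 * y1.
Definition jac f g := D1 f * D2 g - D2 f * D1 g.

Lemma derivation_polar : derivation polar_op.
Proof.
by split=> a b; rewrite /polar_op ?derD1.1 ?derD2.1 ?derD1.2 ?derD2.2; ring.
Qed.

Lemma polar_wr : polar_op wr = 0.
Proof.
rewrite /polar_op /wr !(derivationB derD1) !(derivationB derD2) derD1.2 derD1.2.
rewrite derD2.2 derD2.2 D1x1 D1x2 D1y1 D1y2 D2x1 D2x2 D2y1 D2y2; ring.
Qed.

Lemma D1_polar f : D1 (polar_op f) = polar_op (D1 f).
Proof. by rewrite /polar_op derD1.1 !derD1.2 D1y1 D1y2 D12; ring. Qed.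

Lemma D2_polar f : D2 (polar_op f) = polar_op (D2 f).
Proof. by rewrite /polar_op derD2.1 !derD2.2 D2y1 D2y2 D12; ring. Qed.

Lemma euler_polar f : euler (polar_op f) = polar_op (euler f) - polar_op f.
Proof.
rewrite /euler D1_polar D2_polar /polar_op !derD1.1 !derD2.1 !derD1.2 !derD2.2.
by rewrite D1x1 D1x2 D2x1 D2x2 !D12; ring.
Qed.

Lemma euler_D1 f : euler (D1 f) = D1 (euler f) - D1 f.
Proof. by rewrite /euler derD1.1 !derD1.2 D1x1 D1x2 !D12; ring. Qed.

Lemma euler_D2 f : euler (D2 f) = D2 (euler f) - D2 f.
Proof. by rewrite /euler derD2.1 !derD2.2 D2x1 D2x2 !D12; ring. Qed.

Lemma jacC f g : jac f g = - jac g f.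
Proof. by rewrite /jac; ring. Qed.

Lemma euler_wronskian f g :
  euler f * polar_op g - euler g * polar_op f = wr * jac f g.
Proof. by rewrite /euler /polar_op /wr /jac; ring. Qed.

Lemma euler_iter f m n a : euler f = f *+ m - f *+ n ->
  euler (iter a polar_op f) = iter a polar_op f *+ m - iter a polar_op f *+ (n + a).
Proof.
move=> Ef; elim: a => [|a IH]; first by rewrite addn0.
rewrite iterS euler_polar IH (derivationB derivation_polar).
by rewrite !(derivationMn derivation_polar) addnS mulrSr; ring.
Qed.

Definition wr_multiple z := exists K, z = wr * K.

Lemma wr_multiple0 : wr_multiple 0.
Proof. by exists 0; rewrite mulr0. Qed.

Lemma wr_multipleB a b : wr_multiple a -> wr_multiple b -> wr_multiple (a - b).
Proof. by move=> [K ->] [L ->]; exists (K - L); rewrite mulrBr. Qed.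

Lemma wr_multipleN a : wr_multiple a -> wr_multiple (- a).
Proof. by move=> [K ->]; exists (- K); rewrite mulrN. Qed.

Lemma wr_multiple_polar a : wr_multiple a -> wr_multiple (polar_op a).
Proof.
by move=> [K ->]; exists (polar_op K); rewrite derivation_polar.2 polar_wr mul0r add0r.
Qed.

Hypothesis nat_inv : forall n, (0 < n)%N -> exists u : R, u * n%:R = 1.
Variables (p : R) (d : nat).
Hypothesis euler_p : euler p = p *+ d.

Local Notation P a := (iter a polar_op p).
Local Notation J a c := (jac (P a) (P c)).

Lemma euler_P a : (a <= d)%N -> euler (P a) = P a *+ (d - a).
Proof.
move=> ad; rewrite mulrnBr // -[in X in _ - X](add0n a).
by apply: euler_iter; rewrite euler_p subr0.
Qed.

Lemma euler_D1P a : (a < d)%N -> euler (D1 (P a)) = D1 (P a) *+ (d - a.+1).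
Proof.
move=> ad; rewrite euler_D1 (euler_P (ltnW ad)) (derivationMn derD1).
by rewrite -subnSK // mulrSr addrK.
Qed.

Lemma euler_D2P a : (a < d)%N -> euler (D2 (P a)) = D2 (P a) *+ (d - a.+1).
Proof.
move=> ad; rewrite euler_D2 (euler_P (ltnW ad)) (derivationMn derD2).
by rewrite -subnSK // mulrSr addrK.
Qed.

Lemma polar_jac a c : polar_op (J a c) = J a.+1 c + J a c.+1.
Proof.
rewrite /jac (derivationB derivation_polar) !derivation_polar.2.
by rewrite -!D1_polar -!D2_polar !iterS; ring.
Qed.

(* J(P a, P (a+1)) is a multiple of w, by the key identity applied to the
   first partial derivatives of P a. *)
Lemma jac_adjacent a : (a.+2 <= d)%N -> wr_multiple (J a a.+1).
Proof.
move=> had; have [u u_n] : exists u : R, u * (d - a.+1)%:R = 1.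
  by apply: nat_inv; rewrite subn_gt0.
have E : (d - a.+1)%:R * J a a.+1 = wr * jac (D1 (P a)) (D2 (P a)).
  rewrite -euler_wronskian (euler_D1P (ltnW had)) (euler_D2P (ltnW had)).
  rewrite -D1_polar -D2_polar [P a.+1]iterS.
  by rewrite /jac; ring.
exists (u * jac (D1 (P a)) (D2 (P a))).
by rewrite -[LHS]mul1r -u_n -mulrA E mulrCA.
Qed.

(* Induction on the gap c - a, using polar_jac, handling two gaps at once. *)
Lemma jac_multiple_gap n : (forall a, (a + n < d)%N -> wr_multiple (J a (a + n))) /\
  (forall a, (a + n.+1 < d)%N -> wr_multiple (J a (a + n.+1))).
Proof.
elim: n => [|n [IHn IHn1]].
  split=> a had; last by rewrite addn1; apply: jac_adjacent; rewrite -addn1.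
  by rewrite addn0 /jac mulrC subrr; exact: wr_multiple0.
split=> // a had.
have -> : J a (a + n.+2) = polar_op (J a (a + n.+1)) - J a.+1 (a.+1 + n).
  by rewrite polar_jac addSn -!addnS addrC addKr.
apply: wr_multipleB.
  by apply/wr_multiple_polar/IHn1; rewrite (leq_trans _ had) // ltnS leq_add2l.
by apply: IHn; rewrite addSn -addnS (leq_trans _ had) // ltnS leq_add2l.
Qed.

Lemma jac_multiple a c : (a < d)%N -> (c < d)%N -> wr_multiple (J a c).
Proof.
wlog le_ac : a c / (a <= c)%N => [hwlog|] ha hc.
  case: (leqP a c) => [|/ltnW] le; first exact: hwlog.
  by rewrite jacC; apply/wr_multipleN/hwlog.
by rewrite -(subnKC le_ac); apply: (jac_multiple_gap _).1; rewrite subnKC.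
Qed.

Lemma polar_exchange a c : (a < d)%N -> (c < d)%N ->
  exists K, (d - a)%:R * (P a * P c.+1) - (d - c)%:R * (P c * P a.+1) = wr ^+ 2 * K.
Proof.
move=> ha hc; have [K EK] := jac_multiple ha hc.
exists K; rewrite expr2 -mulrA -EK -euler_wronskian.
by rewrite (euler_P (ltnW ha)) (euler_P (ltnW hc)) [P a.+1]iterS [P c.+1]iterS; ring.
Qed.
End Polarization.

Section MapPoly.
Variable R : nzRingType.

Lemma map_poly_deriv (f : {additive R -> R}) (q : {poly R}) :
  map_poly f q^`() = (map_poly f q)^`().
Proof. by apply/polyP=> i; rewrite coef_map !coef_deriv coef_map raddfMn. Qed.

Lemma map_poly1_vanish (f : R -> R) : f 0 = 0 -> f 1 = 0 -> map_poly f 1 = 0.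
Proof.
move=> f0 f1; apply/polyP=> i.
by rewrite coef_map_id0 // coef1 coef0; case: (i == 0)%N.
Qed.

Lemma map_polyX_vanish (f : R -> R) : f 0 = 0 -> f 1 = 0 -> map_poly f 'X = 0.
Proof.
move=> f0 f1; apply/polyP=> i.
by rewrite coef_map_id0 // coefX coef0; case: (i == 1)%N.
Qed.

Lemma deriv1 : (1 : {poly R})^`() = 0.
Proof. by rewrite -polyC1 derivC. Qed.

Lemma coefX_deriv (q : {poly R}) a : ('X * q^`())`_a = q`_a *+ a.
Proof. by rewrite coefXM; case: a => [|a] /=; rewrite ?mulr0n // coef_deriv. Qed.
End MapPoly.

Lemma map_deriv1 (R : nzRingType) : map_poly (@deriv R) 1 = 0 :> {poly {poly R}}.
Proof. exact: map_poly1_vanish (deriv0 _) (deriv1 R). Qed.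

Lemma derivation_deriv (R : comNzRingType) : derivation (@deriv R).
Proof. by split=> a b; rewrite ?derivD ?derivM. Qed.

Lemma derivation_map_poly (R : comNzRingType) (f : R -> R) :
  derivation f -> derivation (map_poly f : {poly R} -> {poly R}).
Proof.
move=> df; have f0 := derivation0 df.
split=> a b; apply/polyP=> i; first by rewrite coefD !coef_map_id0 // coefD df.1.
rewrite coef_map_id0 // coefD !coefM (big_morph f df.1 f0) -big_split /=.
by apply: eq_bigr => j _; rewrite df.2 !coef_map_id0.
Qed.

Section Coordinates.
Variable R : comNzRingType.

Lemma Dx12 (a : P4 R) : Dx1 (Dx2 a) = Dx2 (Dx1 a).
Proof.
apply/polyP=> i; rewrite !coef_map /=; apply/polyP=> j; rewrite !coef_map /=.
exact: map_poly_deriv.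
Qed.

Lemma derivation_Dx1 : derivation (@Dx1 R).
Proof.
exact/derivation_map_poly/derivation_map_poly/derivation_map_poly/derivation_deriv.
Qed.

Lemma derivation_Dx2 : derivation (@Dx2 R).
Proof. exact/derivation_map_poly/derivation_map_poly/derivation_deriv. Qed.

Lemma Dx1_X1 : Dx1 (X1 R) = 1.
Proof. by rewrite /Dx1 /X1; do 3 rewrite map_polyC /=; rewrite derivX !polyC1. Qed.

Lemma Dx1_X2 : Dx1 (X2 R) = 0.
Proof.
rewrite /Dx1 /X2; do 2 rewrite map_polyC /=.
by rewrite (map_polyX_vanish (deriv0 _) (deriv1 _)) !polyC0.
Qed.

Lemma Dx1_Y1 : Dx1 (Y1 R) = 0.
Proof.
by rewrite /Dx1 /Y1 map_polyC /= (map_polyX_vanish (map_poly0 _) (map_deriv1 _)) polyC0.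
Qed.

Lemma Dx1_Y2 : Dx1 (Y2 R) = 0.
Proof.
exact: map_polyX_vanish (map_poly0 _) (map_poly1_vanish (map_poly0 _) (map_deriv1 _)).
Qed.

Lemma Dx2_X1 : Dx2 (X1 R) = 0.
Proof. by rewrite /Dx2 /X1; do 2 rewrite map_polyC /=; rewrite derivC !polyC0. Qed.

Lemma Dx2_X2 : Dx2 (X2 R) = 1.
Proof. by rewrite /Dx2 /X2; do 2 rewrite map_polyC /=; rewrite derivX !polyC1. Qed.

Lemma Dx2_Y1 : Dx2 (Y1 R) = 0.
Proof.
by rewrite /Dx2 /Y1 map_polyC /= (map_polyX_vanish (deriv0 _) (deriv1 _)) polyC0.
Qed.

Lemma Dx2_Y2 : Dx2 (Y2 R) = 0.
Proof. exact: map_polyX_vanish (map_poly0 _) (map_deriv1 _). Qed.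

Lemma euler_homogeneous (p : {poly {poly R}}) d : homogeneous p d ->
  X1 R * Dx1 (embed2 p) + X2 R * Dx2 (embed2 p) = embed2 p *+ d.
Proof.
move=> hp; rewrite /Dx1 /Dx2 /X1 /X2 /embed2; do 2 rewrite !map_polyC /=.
rewrite -!polyCM -!polyCD -!polyCMn; congr (_ %:P %:P).
apply/polyP=> b; rewrite coefD coefCM coefX_deriv coef_map_id0 ?deriv0 // coefMn.
apply/polyP=> a; rewrite coefD coefX_deriv !coefMn -mulrnDr.
by have [->|/hp ->] := eqVneq (p`_b)`_a 0; rewrite ?mul0rn.
Qed.
End Coordinates.

Lemma natr_inv_polyC (S : nzRingType) (u : S) n :
  u * n%:R = 1 -> u%:P * n%:R = 1 :> {poly S}.
Proof. by move=> un; rewrite -polyC_natr -polyCM un. Qed.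

Lemma nat_inv_P4 (C : fieldType) : has_char0 C ->
  forall n, (0 < n)%N -> exists u : P4 C, u * n%:R = 1.
Proof.
move=> /pcharf0P C0 n n_gt0; exists ((n%:R)^-1 : C)%:P%:P%:P%:P.
do 4 apply: natr_inv_polyC.
by rewrite mulVf // C0 -lt0n.
Qed.

Section Ideals.
Variables (R : comNzRingType) (G : P4 R -> Prop).

Lemma in_idealD f g : in_ideal G f -> in_ideal G g -> in_ideal G (f + g).
Proof.
move=> [s [sG ->]] [t [tG ->]]; exists (s ++ t); split; last by rewrite big_cat.
by move=> q; rewrite mem_cat => /orP [/sG|/tG].
Qed.

Lemma in_idealM r f : in_ideal G f -> in_ideal G (r * f).
Proof.
move=> [s [sG ->]]; exists [seq (r * q.1, q.2) | q <- s]; split.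
  by move=> q /mapP [q' /sG Gq' ->].
by rewrite big_map mulr_sumr; apply: eq_bigr => q _; rewrite mulrA.
Qed.

Lemma in_ideal_gen g : G g -> in_ideal G g.
Proof.
move=> Gg; exists [:: (1, g)]; split; last by rewrite big_seq1 mul1r.
by move=> q; rewrite inE => /eqP ->.
Qed.

Lemma in_ideal_sub (G' : P4 R -> Prop) f :
  (forall g, G g -> G' g) -> in_ideal G f -> in_ideal G' f.
Proof. by move=> GG' [s [sG ->]]; exists s; split => // q /sG /GG'. Qed.

Definition scaled_mod f g := exists c, in_ideal G (f - c * g).

Lemma scaled_mod_refl f : scaled_mod f f.
Proof. by exists 1; rewrite mul1r subrr; exists [::]; rewrite big_nil. Qed.

Lemma scaled_mod_trans f g h : scaled_mod f g -> scaled_mod g h -> scaled_mod f h.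
Proof.
move=> [a fg] [b gh]; exists (a * b).
have -> : f - a * b * h = (f - a * g) + a * (g - b * h) by ring.
by apply: in_idealD => //; apply: in_idealM.
Qed.
End Ideals.

Lemma in_ideal_scaled (R : comNzRingType) (G : P4 R -> Prop) f g :
  scaled_mod G f g -> in_ideal (fun h => h = g \/ G h) f.
Proof.
move=> [c fg]; rewrite -(subrK (c * g) f); apply: in_idealD.
  by apply: in_ideal_sub fg => h; right.
by apply/in_idealM/in_ideal_gen; left.
Qed.

Section ExponentVectors.
Variable k : nat.
Implicit Types (f g v : 'I_k -> nat) (l : 'I_k).

Lemma leqif_sum_pointwise f g : (forall l, f l <= g l)%N ->
  (\sum_(l < k) f l <= \sum_(l < k) g l ?= iff [forall l, f l == g l])%N.
Proof. by move=> fg; apply: leqif_sum => l _; apply/leqif_eq/fg. Qed.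

Lemma eq_of_sum_eq f g : (forall l, f l <= g l)%N ->
  (\sum_(l < k) f l = \sum_(l < k) g l)%N -> f =1 g.
Proof.
move=> fg /eqP; rewrite (leqif_sum_pointwise fg).2 => /forallP fg_eq l.
exact/eqP/fg_eq.
Qed.

Lemma sum_lt_pointwise f g l0 : (forall l, f l <= g l)%N -> (f l0 < g l0)%N ->
  (\sum_(l < k) f l < \sum_(l < k) g l)%N.
Proof.
move=> fg lt0; rewrite (ltn_leqif (leqif_sum_pointwise fg)).
by apply/forallP => /(_ l0) /eqP eq0; rewrite eq0 ltnn in lt0.
Qed.

Lemma big_pair (R : Type) (idx : R) (op : Monoid.com_law idx) (F : 'I_k -> R)
    (l1 l2 : 'I_k) : l1 != l2 ->
  \big[op/idx]_(l < k) F l =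
    op (F l1) (op (F l2) (\big[op/idx]_(l in ~: [set l1; l2]) F l)).
Proof.
move=> ne12; rewrite (bigD1 l1) //= (bigD1 l2) /= 1?eq_sym //; congr (op _ (op _ _)).
by apply: eq_bigl => l; rewrite !inE negb_or.
Qed.

Lemma prod_pair (R : comNzRingType) (F : 'I_k -> R) (l1 l2 : 'I_k) : l1 != l2 ->
  \prod_(l < k) F l = F l1 * (F l2 * \prod_(l in ~: [set l1; l2]) F l).
Proof. exact: big_pair. Qed.

Definition shift v (l1 l2 : 'I_k) l : nat :=
  if l == l1 then (v l1).-1 else if l == l2 then (v l2).+1 else v l.

Lemma shift_out v (l1 l2 : 'I_k) l : l \in ~: [set l1; l2] -> shift v l1 l2 l = v l.
Proof. by rewrite !inE negb_or /shift => /andP [/negbTE -> /negbTE ->]. Qed.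

Lemma shift_l1 v (l1 l2 : 'I_k) : shift v l1 l2 l1 = (v l1).-1.
Proof. by rewrite /shift eqxx. Qed.

Lemma shift_l2 v (l1 l2 : 'I_k) : l1 != l2 -> shift v l1 l2 l2 = (v l2).+1.
Proof. by move=> ne12; rewrite /shift eq_sym (negbTE ne12) eqxx. Qed.

Lemma sum_shift v (l1 l2 : 'I_k) : l1 != l2 -> (0 < v l1)%N ->
  (\sum_(l < k) shift v l1 l2 l = \sum_(l < k) v l)%N.
Proof.
move=> ne12 v1_gt0; rewrite !(big_pair _ _ ne12) shift_l1 shift_l2 //.
by rewrite /= (eq_bigr _ (@shift_out v l1 l2)) addnS -addSn prednK.
Qed.

Lemma shift_bounded v (l1 l2 : 'I_k) d : (forall l, v l <= d)%N -> (v l2 < d)%N ->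
  forall l, (shift v l1 l2 l <= d)%N.
Proof.
move=> vd v2_lt l; rewrite /shift; case: eqP => _; first exact: leq_trans (leq_pred _) _.
by case: eqP => _.
Qed.

Lemma shift_excess (v i : 'I_k -> nat) (l1 l2 : 'I_k) :
  (i l1 < v l1)%N -> (v l2 < i l2)%N ->
  (\sum_(l < k) (shift v l1 l2 l - i l) < \sum_(l < k) (v l - i l))%N.
Proof.
move=> lt1 lt2; apply: (@sum_lt_pointwise _ _ l1) => [l|].
  rewrite /shift; case: eqP => [->|_]; first by rewrite leq_sub2r ?leq_pred.
  by case: eqP => [->|_] //; move: lt2; rewrite -subn_eq0 => /eqP ->.
by rewrite shift_l1; lia.
Qed.
End ExponentVectors.

Lemma cancel_exchange (R : comNzRingType) (A B A' B' Q W K u n m : R) :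
  u * n = 1 -> n * (A * B) - m * (A' * B') = W ^+ 2 * K ->
  B * (A * Q) - u * m * (A' * (B' * Q)) = u * K * (W * Q * W).
Proof.
move=> un E; rewrite -[B * _]mul1r -un.
transitivity (u * Q * (n * (A * B) - m * (A' * B'))); first by ring.
by rewrite E; ring.
Qed.

Section Exchange.
Variables (C : fieldType) (d k : nat) (p : {poly {poly C}}).
Hypotheses (C0 : has_char0 C) (hp : homogeneous p d).

Local Notation P a := (polarn a (embed2 p)).
Local Notation mono v := (\prod_(l < k) P (v l)).
Local Notation equiv := (scaled_mod (Bpow_w (embed2 p) d k.-1)).

Lemma polar_exchange_P4 a c : (a < d)%N -> (c < d)%N ->
  exists K, (d - a)%:R * (P a * P c.+1) - (d - c)%:R * (P c * P a.+1) = wdet C ^+ 2 * K.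
Proof.
exact: (polar_exchange (derivation_Dx1 C) (derivation_Dx2 C) (@Dx12 C)
  (Dx1_X1 C) (Dx1_X2 C) (Dx1_Y1 C) (Dx1_Y2 C) (Dx2_X1 C) (Dx2_X2 C) (Dx2_Y1 C) (Dx2_Y2 C)
  (nat_inv_P4 C0) (euler_homogeneous hp)).
Qed.

Lemma Bpow_wdet2 (v : 'I_k -> nat) (l1 l2 : 'I_k) :
  l1 != l2 -> (forall l, v l <= d)%N ->
  Bpow_w (embed2 p) d k.-1 (wdet C * \prod_(l in ~: [set l1; l2]) P (v l) * wdet C).
Proof.
move=> ne12 vd; exists (wdet C :: [seq P (v l) | l <- enum (~: [set l1; l2])]).
split; last split.
- have card_out := cardsC [set l1; l2]; rewrite cards2 ne12 card_ord in card_out.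
  by rewrite /= size_map -cardE -[in RHS]card_out.
- move=> b; rewrite inE => /orP [/eqP ->|/mapP [l _ ->]]; first by right.
  by left; exists (v l).
- by rewrite big_cons big_map big_enum.
Qed.

Lemma exchange_step (v : 'I_k -> nat) (l1 l2 : 'I_k) : l1 != l2 ->
  (0 < v l1)%N -> (v l2 < d)%N -> (forall l, v l <= d)%N ->
  equiv (mono v) (mono (shift v l1 l2)).
Proof.
move=> ne12 v1_gt0 v2_lt vd.
have [c v1_eq] : exists c, v l1 = c.+1 by exists (v l1).-1; rewrite prednK.
have c_lt : (c < d)%N by rewrite -ltnS -v1_eq ltnS vd.
have [K EK] := polar_exchange_P4 v2_lt c_lt.
have [u u_n] : exists u : P4 C, u * (d - v l2)%:R = 1.
  by apply: nat_inv_P4; rewrite // subn_gt0.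
rewrite !(prod_pair _ ne12) shift_l1 shift_l2 //.
have -> : \prod_(l in ~: [set l1; l2]) P (shift v l1 l2 l) =
    \prod_(l in ~: [set l1; l2]) P (v l) by apply: eq_bigr => l /(shift_out v) ->.
rewrite v1_eq /=.
set Q := \prod_(l in _) _; exists (u * (d - c)%:R).
rewrite (cancel_exchange Q u_n EK).
by apply/in_idealM/in_ideal_gen/Bpow_wdet2.
Qed.

Lemma reach_exponent (i : 'I_k -> nat) : (forall l, i l <= d)%N ->
  forall v : 'I_k -> nat, (forall l, v l <= d)%N ->
  (\sum_(l < k) v l = \sum_(l < k) i l)%N -> equiv (mono v) (mono i).
Proof.
move=> i_le_d v; have [n] := ubnP (\sum_(l < k) (v l - i l))%N.
elim: n v => // n IH v excess_lt v_le_d sum_vi.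
case: (pickP (fun l => i l < v l)%N) => [l1 lt1 | v_le_i]; last first.
  have vi : v =1 i by apply: eq_of_sum_eq sum_vi => l; rewrite leqNgt v_le_i.
  rewrite (eq_bigr (fun l => P (i l))) => [|l _]; last by rewrite vi.
  exact: scaled_mod_refl.
case: (pickP (fun l => v l < i l)%N) => [l2 lt2 | i_le_v]; last first.
  have iv : i =1 v by apply: eq_of_sum_eq (esym sum_vi) => l; rewrite leqNgt i_le_v.
  by rewrite iv ltnn in lt1.
have ne12 : l1 != l2 by apply: contraTneq lt1 => ->; rewrite -leqNgt ltnW.
have v1_gt0 : (0 < v l1)%N := leq_ltn_trans (leq0n _) lt1.
have v2_lt : (v l2 < d)%N := leq_trans lt2 (i_le_d l2).
apply: scaled_mod_trans (exchange_step ne12 v1_gt0 v2_lt v_le_d) (IH _ _ _ _).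
- exact: leq_trans (shift_excess lt1 lt2) excess_lt.
- exact: shift_bounded.
- by rewrite sum_shift.
Qed.
End Exchange.

Theorem lemma3p16 (C : numClosedFieldType) (k d : nat) (hk : (0 < k)%N)
  (p : {poly {poly C}}) (hp : homogeneous p d)
  (i j : 'I_k -> nat) (hi : forall l, (i l <= d)%N) (hj : forall l, (j l <= d)%N)
  (hsum : (\sum_(l < k) i l)%N = (\sum_(l < k) j l)%N) :
  in_ideal
    (fun g => g = \prod_(l < k) polarn (i l) (embed2 p)
              \/ Bpow_w (embed2 p) d k.-1 g)
    (\prod_(l < k) polarn (j l) (embed2 p)).
Proof.
exact: in_ideal_scaled (reach_exponent (pchar_num C) hp hi hj (esym hsum)).
Qed.
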